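(* Let $G$ be a finite strongly semi-3-abelian 3-group, let $r\ge 1$ be an integer with $\exp(G)\le 3^{r}$, and suppose $G$ can be generated by $d$ elements. Then the nilpotency class of $G$ satisfies $c(G)\le (r-1)(d+1)+3$.
   Context: Let $p$ be a prime and $G$ a finite $p$-group. For a positive integer $i$, $G$ is called semi-$p^{i}$-abelian if for all $a,b\in G$: $(ab)^{p^{i}}=1$ if and only if $a^{p^{i}}b^{p^{i}}=1$. $G$ is called strongly semi-$p$-abelian if it is semi-$p^{i}$-abelian for every positive integer $i$. $c(G)$ denotes the nilpotency class of $G$. *)

From mathcomp Require Import all_boot fingroup pgroup nilpotent abelian.
Set Implicit Arguments. Unset Strict Implicit. Unset Printing Implicit Defensive.
Local Open Scope group_scope.

Definition semi_pi_abelian (gT : finGroupType) (p i : nat) (G : {set gT}) :=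
  forall a b, a \in G -> b \in G ->
    ((a * b) ^+ (p ^ i) = 1 <-> a ^+ (p ^ i) * b ^+ (p ^ i) = 1).

Definition strongly_semi_p_abelian (gT : finGroupType) (p : nat) (G : {set gT}) :=
  forall i, 0 < i -> semi_pi_abelian p i G.

Definition generated_by_at_most (gT : finGroupType) (d : nat) (G : {set gT}) :=
  exists X : {set gT}, #|X| <= d /\ <<X>> = G.

From mathcomp Require Import all_boot fingroup pgroup nilpotent abelian.
From mathcomp Require Import morphism quotient commutator sylow zify.

(* If G has exponent 3 it is 2-Engel, and modulo L_5 the
   commutator [a, b, c, d] is congruent both to [c, d, a, b] (permuting entries
   with the 2-Engel law) and to its inverse (Hall-Witt); as it has order 3, it
   lies in L_5; thus L_4 <= L_5, whence L_4 = 1.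
   In general, strong semi-3-abelianity makes Omega = {x | x^3 = 1} a normal
   subgroup with (x h)^3 = h^3 for x in Omega, and G / Omega satisfies the
   hypotheses with r - 1, so L_m(G) <= Omega for m = (r - 2)(d + 1) + 4.
   Above level m the cube relation gives [y, h, h] = 1 modulo three more terms
   of the lower central series, hence a commutator [y, x_1, ..., x_k] with
   y in L_m and a repeated entry x_i = x_j lies one term deeper than its
   weight.  As G is generated by d elements, commutators with d + 1 generator
   entries repeat one, so L_(m+d+1) <= L_(m+d+2), which forces L_(m+d+1) = 1. *)

Set Implicit Arguments.
Unset Strict Implicit.
Unset Printing Implicit Defensive.

Local Open Scope group_scope.

Section LowerCentralMembership.
Variables (gT : finGroupType) (G : {group gT}).
Local Notation L n := 'L_n(G).

Lemma lcn_memG n x : x \in L n -> x \in G.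
Proof. exact: (subsetP (lcn_sub n G)). Qed.

Lemma lcn_memJ n x g : x \in L n -> g \in G -> x ^ g \in L n.
Proof. by move=> Lx Gg; rewrite memJ_norm // (subsetP (lcn_norm n G)). Qed.

Lemma lcn_memR n x g : x \in L n -> g \in G -> [~ x, g] \in L n.+1.
Proof. by move=> Lx Gg; apply: (subsetP (lcnSnS n G)); apply: mem_commg. Qed.

Lemma lcn_memW m n x : x \in L m -> n <= m -> x \in L n.
Proof. by move=> Lx le_nm; apply: (subsetP (lcn_sub_leq G le_nm)). Qed.

Lemma commg_gen_closed (K : {group gT}) (A : {set gT}) x :
  G \subset 'N(K) -> x \in G -> A \subset G ->
  {in A, forall a, [~ x, a] \in K} -> {in <<A>>, forall y, [~ x, y] \in K}.
Proof.
move=> nKG Gx sAG xAK.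
pose S := [set y in G | [~ x, y] \in K].
have gS : group_set S.
  apply/group_setP; split; first by rewrite inE group1 commg1 group1.
  move=> y z; rewrite !inE => /andP[Gy Ky] /andP[Gz Kz].
  by rewrite groupM // commgMJ groupM // memJ_norm // (subsetP nKG).
have sAS : <<A>> \subset Group gS.
  by rewrite gen_subG; apply/subsetP=> a Aa; rewrite inE (subsetP sAG) ?xAK.
by move=> y /(subsetP sAS); rewrite inE => /andP[].
Qed.

(* The Hall-Witt identity reduces [~ x, [~ b, g]] to commutators of lower
   weight in the second argument. *)
Lemma lcn_memRR i j x y : x \in L i.+1 -> y \in L j.+1 -> [~ x, y] \in L (i + j).+2.
Proof.
elim: j i x y => [|j IH] i x y Lx Ly; first by rewrite addn0 lcn_memR.
have nKG : G \subset 'N(L (i + j.+1).+2) by apply: lcn_norm.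
have Gx := lcn_memG Lx.
move: Ly; rewrite lcnSn => Ly.
apply: (commg_gen_closed nKG Gx _ _ Ly).
  by apply/subsetP=> _ /imset2P[b g Lb Gg ->]; rewrite groupR // (lcn_memG Lb).
move=> _ /imset2P[b g Lb Gg ->].
rewrite -invg_comm groupV.
have := Hall_Witt_identity b g^-1 x; rewrite invgK => HW.
have t2 : [~ g^-1, x^-1, b] \in L (i + j.+1).+2.
  have : [~ g^-1, x^-1] \in L i.+2.
    by rewrite -invg_comm groupV lcn_memR ?groupV.
  by move/(IH i.+1 _ _)/(_ Lb); rewrite addSn addnS.
have t3 : [~ x, b^-1, g^-1] \in L (i + j.+1).+2.
  by rewrite addnS lcn_memR ?groupV // IH ?groupV.
have -> : [~ b, g, x] = (([~ g^-1, x^-1, b] ^ x * [~ x, b^-1, g^-1] ^ b)^-1) ^ g.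
  by rewrite -[LHS](conjgK g^-1) invgK; congr (_ ^ _); apply/eqP;
     rewrite eq_mulgV1 invgK mulgA HW.
by rewrite lcn_memJ // groupV groupM // lcn_memJ // (lcn_memG Lb).
Qed.

Lemma nil_lcn_stable j : nilpotent G -> L j.+1 \subset L j.+2 -> L j.+1 = 1.
Proof.
move=> nilG sub.
have sLjt t : L j.+1 \subset L (j.+1 + t).
  elim: t => [|t IH]; first by rewrite addn0.
  apply: subset_trans sub _; rewrite addnS lcnSn addSn lcnSn.
  by apply: commSg; rewrite -addSn.
case/lcnP: nilG => k Lk.
apply/trivgP; rewrite -Lk; apply: subset_trans (sLjt k.+1) _.
by apply: lcn_sub_leq; rewrite addnS ltnS leq_addl.
Qed.

End LowerCentralMembership.

Section NormalMembership.
Variables (gT : finGroupType) (G K : {group gT}).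
Hypothesis nKG : G \subset 'N(K).

Lemma mem_mulg_mid P x Q :
  x \in K -> P \in G -> Q \in G -> (P * x * Q \in K) = (P * Q \in K).
Proof.
move=> Kx GP GQ; rewrite -mulgA (conjgC x Q) mulgA groupMr //.
by rewrite memJ_norm // (subsetP nKG).
Qed.

Lemma mem_mulgC x y : x \in G -> y \in G -> (x * y \in K) = (y * x \in K).
Proof.
move=> Gx Gy; rewrite -(memJ_norm (y * x) (subsetP nKG _ Gy)).
by rewrite conjgE -mulgA mulKg.
Qed.

Lemma mem_normal_trim x1 x2 x3 y1 y2 y3 a e k :
  x1 \in G -> x2 \in G -> x3 \in G -> y1 \in G -> y2 \in G -> y3 \in G ->
  a \in G -> e \in G -> k \in G ->
  x1 \in K -> x3 \in K -> y2 \in K -> y3 \in K -> k \in K ->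
  [~ x1 * x2 * x3, a] \in K ->
  ((x1 * x2 * x3) ^ a * (y1 * y2 * y3)) ^ e * k \in K -> x2 * y1 \in K.
Proof.
move=> Gx1 Gx2 Gx3 Gy1 Gy2 Gy3 Ga Ge Gk Kx1 Kx3 Ky2 Ky3 Kk KR.
rewrite groupMr // memJ_norm ?(subsetP nKG) //.
have GX : x1 * x2 * x3 \in G by rewrite !groupM.
have GY : y1 * y2 * y3 \in G by rewrite !groupM.
rewrite (conjg_mulR (x1 * x2 * x3) a) (mem_mulg_mid KR GX GY).
rewrite (mulgA _ (y1 * y2) y3) groupMr // (mulgA _ y1 y2) groupMr //.
by rewrite (mem_mulg_mid Kx3 (groupM Gx1 Gx2) Gy1) -mulgA groupMl.
Qed.

End NormalMembership.

Definition commg_seq (gT : finGroupType) (y : gT) (s : seq gT) := foldl commg y s.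
Arguments commg_seq : simpl never.

Lemma commg_seq_cons (gT : finGroupType) (y g : gT) s :
  commg_seq y (g :: s) = commg_seq [~ y, g] s.
Proof. by []. Qed.

Lemma commg_seq_rcons (gT : finGroupType) (y : gT) s g :
  commg_seq y (rcons s g) = [~ commg_seq y s, g].
Proof. by rewrite /commg_seq foldl_rcons. Qed.

Lemma commg_seq_cat (gT : finGroupType) (y : gT) s1 s2 :
  commg_seq y (s1 ++ s2) = commg_seq (commg_seq y s1) s2.
Proof. by rewrite /commg_seq foldl_cat. Qed.

Section CommutatorSequences.
Variables (gT : finGroupType) (G : {group gT}).
Local Notation L n := 'L_n(G).

Lemma lcn_mem_commg_seq n y (s : seq gT) :
  y \in L n -> all (mem G) s -> commg_seq y s \in L (n + size s).
Proof.
elim: s n y => [|g s IH] n y Ly /=; first by rewrite addn0.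
by case/andP=> Gg Gs; rewrite addnS -addSn IH ?lcn_memR.
Qed.

(* Congruence to an inverse, u = v^-1 mod L j.+1, is encoded as u * v \in L j.+1;
   it is preserved by commutation with g. *)
Lemma lcn_commg_inv_congr j u v g :
  u \in L j -> v \in L j -> u * v \in L j.+1 -> g \in G ->
  [~ u, g] * [~ v, g] \in L j.+2.
Proof.
move=> Lu Lv Luv Gg.
have Gv := lcn_memG Lv.
have -> : u = (u * v) * v^-1 by rewrite mulgK.
rewrite commMgJ -mulgA; apply: groupM; first by rewrite lcn_memJ ?lcn_memR ?groupV.
set a := [~ v^-1, g].
have La : a \in L j.+1 by rewrite lcn_memR ?groupV.
have -> : [~ v, g] = (a ^ v)^-1.
  by apply/eqP; rewrite eq_sym eq_invg_mul -[a ^ v * _]commMgJ mulVg comm1g.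
rewrite conjg_mulR invMg mulgA.
have -> : a * [~ a, v]^-1 * a^-1 = ([~ a, v]^-1) ^ a^-1 by rewrite conjgE invgK mulgA.
apply: lcn_memJ; last by rewrite groupV (lcn_memG La).
by rewrite groupV lcn_memR.
Qed.

Lemma lcn_commgV_congr j z g : z \in L j -> g \in G -> [~ z, g^-1] * [~ z, g] \in L j.+2.
Proof.
move=> Lz Gg; set b := [~ z, g].
have Lb : b \in L j.+1 by apply: lcn_memR.
have -> : [~ z, g^-1] = (b^-1) ^ g^-1.
  apply: (canRL (conjgK g)); apply: (mulgI b).
  by rewrite -commgMJ mulVg commg1 mulgV.
rewrite conjg_mulR -mulgA.
have -> : [~ b^-1, g^-1] * b = b * [~ b^-1, g^-1] ^ b by rewrite conjgC.
rewrite mulKg; apply: lcn_memJ; last exact: lcn_memG Lb.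
by apply: lcn_memR; rewrite ?groupV.
Qed.

Lemma lcn_commg_seq_inv_congr j u v (s : seq gT) :
  u \in L j -> v \in L j -> u * v \in L j.+1 -> all (mem G) s ->
  commg_seq u s * commg_seq v s \in L (j + size s).+1.
Proof.
elim: s j u v => [|g s IH] j u v Lu Lv Luv /=; first by rewrite addn0.
case/andP=> Gg Gs; rewrite addnS -addSn.
by apply: IH; rewrite ?lcn_memR ?lcn_commg_inv_congr.
Qed.

End CommutatorSequences.

Lemma norms_memJ (gT : finGroupType) (A : {set gT}) (G : {group gT}) :
  {in A & G, forall x g, x ^ g \in A} -> G \subset 'N(A).
Proof.
move=> AJ; apply/normsP=> g Gg; apply/eqP.
rewrite eqEcard cardJg leqnn andbT.
by apply/subsetP=> _ /imsetP[x Ax ->]; apply: AJ.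
Qed.

Lemma not_uniq_split (T : eqType) (s : seq T) :
  ~~ uniq s -> exists s1 a s2 s3, s = s1 ++ a :: s2 ++ a :: s3.
Proof.
elim: s => [|x s IH] //=; rewrite negb_and negbK => /orP[xs|/IH].
  by case/splitPr: xs => s2 s3; exists [::], x, s2, s3.
by case=> s1 [a [s2 [s3 ->]]]; exists (x :: s1), a, s2, s3.
Qed.

Lemma not_uniq_card_lt (T : finType) (X : {set T}) s :
  all (mem X) s -> #|X| < size s -> ~~ uniq s.
Proof.
move=> Xs ltXs; apply/negP=> /card_uniqP cards.
have : #|s| <= #|X| by apply/subset_leq_card/subsetP=> x /(allP Xs).
by rewrite cards leqNgt ltXs.
Qed.

Definition lcn_engel2_from (gT : finGroupType) (G : {set gT}) n :=
  forall m z k, n <= m -> z \in 'L_m(G) -> k \in G -> [~ z, k, k] \in 'L_m.+3(G).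

Section RelativeEngel.
Variables (gT : finGroupType) (G : {group gT}) (n : nat).
Hypothesis engelG : lcn_engel2_from G n.
Local Notation L n := 'L_n(G).

(* Expand [~ y, g * h, g * h] and discard everything in L m.+3. *)
Lemma lcn_engel2_swap m y g h : n <= m -> y \in L m -> g \in G -> h \in G ->
  [~ y, g, h] * [~ y, h, g] \in L m.+3.
Proof.
move=> le_nm Ly Gg Gh.
have nKG : G \subset 'N(L m.+3) by apply: lcn_norm.
have Gy := lcn_memG Ly; have Ggh : g * h \in G by rewrite groupM.
have := engelG le_nm Ly Ggh.
set a := [~ y, g]; set b := [~ y, h]; set e := [~ a, h].
have La : a \in L m.+1 by apply: lcn_memR.
have Lb : b \in L m.+1 by apply: lcn_memR.
have Le : e \in L m.+2 by apply: lcn_memR.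
have Ga := lcn_memG La; have Gb := lcn_memG Lb; have Ge := lcn_memG Le.
have -> : [~ y, g * h, g * h] =
   (([~ b, h] * [~ b, g] * [~ b, g, h]) ^ a * ([~ a, h] * [~ a, g] * [~ a, g, h])) ^ e
   * [~ e, g * h].
  have -> : [~ y, g * h] = b * a * e by rewrite commgMR.
  by rewrite commMgJ commMgJ !commgMR.
have LX : [~ b, h] * [~ b, g] * [~ b, g, h] \in L m.+2.
  apply: groupM; first by apply: groupM; apply: lcn_memR.
  apply: (lcn_memW _ (leqnSn m.+2)); apply: lcn_memR => //; exact: lcn_memR.
have Kbh : [~ b, h] \in L m.+3 by apply: engelG.
have Kag : [~ a, g] \in L m.+3 by apply: engelG.
have Kbgh : [~ b, g, h] \in L m.+3 by apply: lcn_memR => //; apply: lcn_memR.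
have Kagh : [~ a, g, h] \in L m.+3 by apply: lcn_memR => //; apply: lcn_memR.
have Kegh : [~ e, g * h] \in L m.+3 by apply: lcn_memR.
move=> K; rewrite (mem_mulgC nKG) ?groupR //.
apply: (mem_normal_trim nKG _ _ _ _ _ _ _ _ _ Kbh Kbgh Kag Kagh Kegh
          (lcn_memR LX Ga) K); by rewrite ?groupR.
Qed.

(* Move the second occurrence of [a] leftwards, one [lcn_engel2_swap] per step. *)
Lemma lcn_commg_seq_repeat q (z a : gT) (s2 s3 : seq gT) : n <= q -> z \in L q ->
  all (mem G) (a :: s2 ++ a :: s3) ->
  commg_seq z (a :: s2 ++ a :: s3) \in L (q + size (a :: s2 ++ a :: s3)).+1.
Proof.
elim/last_ind: s2 s3 => [|s2 b IH] s3 le_nq Lz.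
  rewrite /= => /and3P[Ga _ Gs3]; rewrite !commg_seq_cons.
  by apply: lcn_memW (lcn_mem_commg_seq (engelG le_nq Lz Ga) Gs3) _ => /=; lia.
rewrite -cats1 -catA /= all_cat /= => /andP[Ga /andP[Gs2 /and3P[Gb _ Gs3]]].
have := IH (b :: s3) le_nq Lz; rewrite /= all_cat /= Ga Gs2 Gb Gs3 => /(_ isT).
set z' := commg_seq z (a :: s2).
have Lz' : z' \in L (q + size (a :: s2)) by rewrite lcn_mem_commg_seq //= Ga.
have word c d : commg_seq z (a :: s2 ++ [:: c, d & s3]) = commg_seq [~ z', c, d] s3.
  by rewrite -cat_cons commg_seq_cat !commg_seq_cons.
rewrite !word !size_cat /= => Labs.
have swap := lcn_engel2_swap (leq_trans le_nq (leq_addr _ _)) Lz' Gb Ga.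
have Lprod := lcn_commg_seq_inv_congr (lcn_memR (lcn_memR Lz' Gb) Ga)
                                      (lcn_memR (lcn_memR Lz' Ga) Gb) swap Gs3.
rewrite -(mulgK (commg_seq [~ z', a, b] s3) (commg_seq [~ z', b, a] s3)).
by rewrite groupM ?groupV // (lcn_memW Lprod) //=; lia.
Qed.

End RelativeEngel.

Section GeneratedLowerCentral.
Variables (gT : finGroupType) (G : {group gT}) (X : {set gT}).
Hypotheses (sXG : X \subset G) (sGX : G \subset <<X>>).
Local Notation L n := 'L_n(G).

Lemma lcn_sub_commg_gen j (K : {group gT}) :
  G \subset 'N(K) -> {in L j.+1 & X, forall z x, [~ z, x] \in K} -> L j.+2 \subset K.
Proof.
move=> nKG zXK; rewrite lcnSn gen_subG.
apply/subsetP=> _ /imset2P[z g Lz Gg ->].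
apply: (commg_gen_closed nKG (lcn_memG Lz) sXG) => [x Xx|]; first exact: zXK.
exact: (subsetP sGX).
Qed.

Lemma lcn_sub_commg_seq n k (K : {group gT}) :
  G \subset 'N(K) -> L (n + k).+2 \subset K ->
  (forall y (s : seq gT), y \in L n.+1 -> size s = k -> all (mem X) s ->
     commg_seq y s \in K) ->
  L (n + k).+1 \subset K.
Proof.
elim: k K => [|k IH] K nKG sLK seqK.
  by apply/subsetP=> y; rewrite addn0 => Ly; apply: (seqK y [::]).
rewrite addnS; apply: (lcn_sub_commg_gen nKG) => z x Lz Xx.
have Gx := subsetP sXG x Xx.
pose S := [set u in L (n + k).+1 | [~ u, x] \in K].
have gS : group_set S.
  apply/group_setP; split; first by rewrite inE group1 comm1g group1.
  move=> u v; rewrite !inE => /andP[Lu Ku] /andP[Lv Kv].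
  by rewrite groupM // commMgJ groupM // memJ_norm // (subsetP nKG) // (lcn_memG Lv).
have nSG : G \subset 'N(Group gS).
  apply: norms_memJ => u g; rewrite !inE => /andP[Lu Ku] Gg.
  rewrite lcn_memJ //= conjg_mulR commMgJ; apply: groupM.
    by rewrite memJ_norm // (subsetP nKG) // groupR // (lcn_memG Lu).
  by apply: (subsetP sLK); rewrite addnS; apply: lcn_memR => //; apply: lcn_memR.
have sLS : L (n + k).+2 \subset Group gS.
  apply/subsetP=> u Lu; rewrite inE (lcn_memW Lu (leqnSn _)) /=.
  by apply: (subsetP sLK); rewrite addnS; apply: lcn_memR.
suff /(IH _ nSG sLS)/subsetP/(_ z Lz) : forall y (s : seq gT), y \in L n.+1 ->
    size s = k -> all (mem X) s -> commg_seq y s \in Group gS.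
  by rewrite inE => /andP[].
move=> y s Ly size_s Xs; rewrite inE.
have Gs : all (mem G) s by apply/allP=> u /(allP Xs) /(subsetP sXG).
rewrite -addSn -size_s lcn_mem_commg_seq //= -commg_seq_rcons.
by rewrite seqK ?size_rcons ?size_s // all_rcons Xs andbT.
Qed.

(* By pigeonhole, a commutator sequence with d.+1 entries from X repeats one. *)
Lemma lcn_engel2_bound n d :
  nilpotent G -> #|X| <= d -> lcn_engel2_from G n.+1 -> L (n + d).+2 = 1.
Proof.
move=> nilG leXd engelG; apply: nil_lcn_stable nilG _.
rewrite -addnS; apply: lcn_sub_commg_seq (lcn_norm _ _) (subxx _) _.
move=> y s Ly size_s Xs.
have Gs : all (mem G) s by apply/allP=> u /(allP Xs) /(subsetP sXG).
have /not_uniq_split[s1 [a [s2 [s3 def_s]]]] : ~~ uniq s.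
  by apply: not_uniq_card_lt Xs _; rewrite size_s ltnS.
move: Gs; rewrite def_s all_cat commg_seq_cat => /andP[Gs1 Gs23].
have Lz := lcn_mem_commg_seq Ly Gs1.
have := lcn_commg_seq_repeat engelG (leq_addr _ _) Lz Gs23.
by move/lcn_memW; apply; rewrite -addnA -size_cat -def_s size_s; lia.
Qed.

End GeneratedLowerCentral.

Lemma expg3_mulV_conj (gT : finGroupType) (y h : gT) :
  (y * h^-1) ^+ 3 * h ^+ 3 = y * y ^ h * y ^ (h * h).
Proof.
by rewrite !expgS expg0 !mulg1 !conjgE invMg !mulgA !mulgK !mulgKV.
Qed.

Lemma expg3_conj_commg (gT : finGroupType) (y c e : gT) :
  y ^+ 3 = 1 -> c ^+ 3 = 1 -> y * (y * c) * (y * c * (c * e)) = 1 ->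
  e = ([~ c, y] ^ c^-1)^-1.
Proof.
move=> y3 c3 yce.
have y3' : y * y * y = 1 by rewrite -y3 expgS expgS expg1 mulgA.
have cc : c * c = c^-1.
  by apply/eqP; rewrite eq_mulgV1 invgK -c3 expgS expgS expg1 mulgA.
have : y * y * y * (c * [~ c, y] * c^-1 * e) = 1.
  rewrite -yce -cc !mulgA -(mulgA (y * y) c y) (commgC c y) !mulgA.
  by rewrite -(mulgA _ c c) cc.
rewrite y3' mul1g [_ ^ c^-1]conjgE invgK => ce.
by apply/eqP; rewrite eq_sym eq_invg_mul mulgA ce.
Qed.

(* Cubes are invariant under multiplication by elements of N, so
   y * y ^ h * y ^ (h * h) = (y * h^-1) ^+ 3 * h ^+ 3 = 1 for y in N; expanding
   the conjugates expresses [~ y, h, h] through the deeper commutator [~ c, y]. *)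
Lemma lcn_engel2_from_cubes (gT : finGroupType) (G N : {group gT}) n :
  1 < n -> {in N, forall x, x ^+ 3 = 1} ->
  {in N & G, forall x h, (x * h) ^+ 3 = h ^+ 3} ->
  'L_n(G) \subset N -> lcn_engel2_from G n.
Proof.
move=> lt1n N3 Ncube sLN m y h le_nm Ly Gh.
have yN : y \in N by apply: (subsetP sLN); apply: lcn_memW Ly le_nm.
set c := [~ y, h].
have Lc : c \in 'L_m.+1(G) by apply: lcn_memR.
have cN : c \in N by apply: (subsetP sLN); apply: lcn_memW Lc (leqW le_nm).
have := expg3_mulV_conj y h; rewrite Ncube ?groupV // expgVn mulVg.
have yh : y ^ h = y * c by rewrite conjg_mulR.
have yhh : y ^ (h * h) = y * c * (c * [~ c, h]) by rewrite conjgM yh conjMg yh conjg_mulR.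
rewrite yhh yh => /esym yce.
rewrite (expg3_conj_commg (N3 _ yN) (N3 _ cN) yce) groupV lcn_memJ ?groupV ?(lcn_memG Lc) //.
case: m le_nm Ly Lc {yce} => [|m] le_nm Ly Lc; first by exfalso; lia.
by apply: lcn_memW (lcn_memRR Lc Ly) _; lia.
Qed.

Lemma expg3_mulgg (gT : finGroupType) (a : gT) : a ^+ 3 = 1 -> a * a = a^-1.
Proof. by move=> a3; apply/eqP; rewrite eq_mulgV1 invgK -a3 expgS expgS expg1 mulgA. Qed.

Lemma expg3_commute_conj (gT : finGroupType) (x y : gT) :
  y ^+ 3 = 1 -> (x * y) ^+ 3 = 1 -> (x * y^-1) ^+ 3 = 1 -> commute x (x ^ y).
Proof.
move=> y3 xy3 xyV3.
have xyx : x * y * x = y^-1 * x^-1 * y^-1.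
  by have := expg3_mulgg xy3; rewrite invMg => <-; rewrite !mulgA mulgK.
have xyVx : x * y^-1 * x = y * x^-1 * y.
  by have := expg3_mulgg xyV3; rewrite invMg invgK => <-; rewrite !mulgA mulgKV.
have yy : y * y = y^-1 := expg3_mulgg y3.
have yVyV : y^-1 * y^-1 = y by rewrite -invMg yy invgK.
rewrite /commute conjgE.
transitivity (y * x^-1 * y^-1); first by rewrite !mulgA xyVx -mulgA yy.
by rewrite -(mulgA y^-1 (x * y) x) xyx !mulgA yVyV.
Qed.

Lemma commgVV (gT : finGroupType) (c d : gT) : [~ c^-1, d^-1] = [~ c, d] ^ (d * c)^-1.
Proof. by rewrite /commg /conjg !invgK invMg !mulgA mulgK mulgV mul1g. Qed.

Section ExponentThree.
Variables (gT : finGroupType) (G : {group gT}).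
Hypothesis G3 : {in G, forall x, x ^+ 3 = 1}.
Local Notation L n := 'L_n(G).
Local Notation phi := (coset 'L_5(G)).

Lemma exponent3_engel2 y h : y \in G -> h \in G -> [~ y, h, h] = 1.
Proof.
move=> Gy Gh; apply/eqP/commgP.
have GhV := groupVr Gh.
have chy := expg3_commute_conj (G3 Gy) (G3 (groupM GhV Gy)) (G3 (groupM GhV (groupVr Gy))).
rewrite commgEr; apply/commute_sym/commuteM; last exact: commute_refl.
by have := commuteV (commute_sym chy); rewrite invgK => /commute_sym.
Qed.

Lemma exponent3_lcn_engel2 : lcn_engel2_from G 0.
Proof. by move=> m z k _ Lz Gk; rewrite exponent3_engel2 ?group1 ?(lcn_memG Lz). Qed.

Let nL5G : G \subset 'N(L 5) := lcn_norm 5 G.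

Lemma phiM x y : x \in G -> y \in G -> phi (x * y) = phi x * phi y.
Proof. by move=> Gx Gy; rewrite morphM ?(subsetP nL5G). Qed.

Lemma phi_inv_congr x y : x \in G -> y \in G -> x * y \in L 5 -> phi x = (phi y)^-1.
Proof.
by move=> Gx Gy L5xy; apply/eqP; rewrite eq_mulgV1 invgK -phiM // coset_id.
Qed.

Lemma phiJ_lcn4 x g : x \in L 4 -> g \in G -> phi (x ^ g) = phi x.
Proof.
move=> Lx Gg; have Gx := lcn_memG Lx.
by rewrite conjg_mulR phiM ?groupR // (coset_id (lcn_memR Lx Gg)) mulg1.
Qed.

Lemma phi_lcn4_commute x g : x \in L 4 -> g \in G -> commute (phi x) (phi g).
Proof.
move=> Lx Gg; have Gx := lcn_memG Lx; apply/commgP.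
rewrite -morphR ?(subsetP nL5G) //; apply/eqP.
exact: coset_id (lcn_memR Lx Gg).
Qed.

Lemma lcn4_swap34 a b c d : a \in G -> b \in G -> c \in G -> d \in G ->
  [~ a, b, c, d] * [~ a, b, d, c] \in L 5.
Proof.
move=> Ga Gb Gc Gd.
exact: (lcn_engel2_swap exponent3_lcn_engel2 (leq0n 2) (lcn_memR (Ga : a \in L 1) Gb)).
Qed.

Lemma lcn4_swap23 a b c d : a \in G -> b \in G -> c \in G -> d \in G ->
  [~ a, b, c, d] * [~ a, c, b, d] \in L 5.
Proof.
move=> Ga Gb Gc Gd; have La : a \in L 1 := Ga.
apply: lcn_commg_inv_congr (lcn_memR (lcn_memR La Gb) Gc) (lcn_memR (lcn_memR La Gc) Gb) _ Gd.
exact: (lcn_engel2_swap exponent3_lcn_engel2 (leq0n 1) La).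
Qed.

Lemma lcn4_swap12 a b c d : a \in G -> b \in G -> c \in G -> d \in G ->
  [~ b, a, c, d] * [~ a, b, c, d] \in L 5.
Proof.
move=> Ga Gb Gc Gd.
have Lba : [~ b, a] \in L 2 := lcn_memR (Gb : b \in L 1) Ga.
have Lab : [~ a, b] \in L 2 := lcn_memR (Ga : a \in L 1) Gb.
have Lbaab : [~ b, a] * [~ a, b] \in L 3 by rewrite -invg_comm mulVg group1.
have Lbac_abc := lcn_commg_inv_congr Lba Lab Lbaab Gc.
exact: lcn_commg_inv_congr (lcn_memR Lba Gc) (lcn_memR Lab Gc) Lbac_abc Gd.
Qed.

Lemma phi_Hall_Witt u c d : u \in L 2 -> c \in G -> d \in G ->
  phi [~ u, c, d] * phi [~ c^-1, d^-1, u] * phi [~ d, u^-1, c^-1] = 1.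
Proof.
move=> Lu Gc Gd; have GcV := groupVr Gc; have GdV := groupVr Gd.
have Lucd : [~ u, c, d] \in L 4 by apply: lcn_memR => //; apply: lcn_memR.
have LcduV : [~ c^-1, d^-1, u] \in L 4.
  exact: lcn_memRR (lcn_memR (GcV : c^-1 \in L 1) GdV) Lu.
have LduVcV : [~ d, u^-1, c^-1] \in L 4.
  apply: lcn_memR GcV; rewrite -invg_comm groupV.
  by apply: lcn_memR; rewrite ?groupV.
have := congr1 phi (Hall_Witt_identity u c^-1 d); rewrite invgK morph1.
have Gucd := groupJ (lcn_memG Lucd) GcV; have Gcdu := groupJ (lcn_memG LcduV) Gd.
have Gduc := groupJ (lcn_memG LduVcV) (lcn_memG Lu).
rewrite (phiM (groupM Gucd Gcdu) Gduc) (phiM Gucd Gcdu).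
by rewrite !phiJ_lcn4 ?(lcn_memG Lu).
Qed.

Lemma phi_commgVV u c d : u \in L 2 -> c \in G -> d \in G ->
  phi [~ c^-1, d^-1, u] = phi [~ [~ c, d], u].
Proof.
move=> Lu Gc Gd; have Gu := lcn_memG Lu.
have Lcd : [~ c, d] \in L 2 := lcn_memR (Gc : c \in L 1) Gd.
have Gdc : (d * c)^-1 \in G by rewrite groupV groupM.
set t := [~ [~ c, d], (d * c)^-1].
have Lt : t \in L 3 := lcn_memR Lcd Gdc.
have Lcdu : [~ [~ c, d], u] \in L 4 := lcn_memRR Lcd Lu.
rewrite commgVV conjg_mulR -/t commMgJ phiM ?groupJ ?groupR ?(lcn_memG Lcdu) ?(lcn_memG Lt) //.
by rewrite phiJ_lcn4 ?(lcn_memG Lt) // (coset_id (lcn_memRR Lt Lu)) mulg1.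
Qed.

Lemma phi_commgV u c d : u \in L 2 -> c \in G -> d \in G ->
  phi [~ d, u^-1, c^-1] = phi [~ u, c, d].
Proof.
move=> Lu Gc Gd; have Gu := lcn_memG Lu; have GuV := groupVr Gu; have GcV := groupVr Gc.
have LuV : u^-1 \in L 2 by rewrite groupV.
have Lud : [~ u, d] \in L 3 := lcn_memR Lu Gd.
have LudV : [~ u, d]^-1 \in L 3 by rewrite groupV.
have LduV : [~ d, u^-1] \in L 3 by rewrite -invg_comm groupV lcn_memR.
have Ldu_ud : [~ d, u^-1] * [~ u, d]^-1 \in L 4.
  rewrite -invg_comm -invMg groupV (mem_mulgC (lcn_norm 4 G)) ?groupR //.
  by apply: lcn_commg_inv_congr LuV Lu _ Gd; rewrite mulVg group1.
have LudVud : [~ u, d]^-1 * [~ u, d] \in L 4 by rewrite mulVg group1.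
have GudV := lcn_memG LudV; have Gud := lcn_memG Lud.
rewrite (phi_inv_congr _ _ (lcn_commg_inv_congr LduV LudV Ldu_ud GcV)) ?groupR //.
rewrite (phi_inv_congr _ _ (lcn_commg_inv_congr LudV Lud LudVud GcV)) ?groupR // invgK.
rewrite (phi_inv_congr _ _ (lcn_commgV_congr Lud Gc)) ?groupR //.
by rewrite (phi_inv_congr _ _ (lcn_engel2_swap exponent3_lcn_engel2 (leq0n 2) Lu Gc Gd))
   ?groupR ?invgK.
Qed.

(* Hall-Witt identity for [u, c^-1, d] modulo L 5, with the second and third
   factors rewritten by [phi_commgVV] and [phi_commgV]. *)
Lemma phi_commg_lcn2 u c d : u \in L 2 -> c \in G -> d \in G ->
  phi [~ [~ c, d], u] = phi [~ u, c, d].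
Proof.
move=> Lu Gc Gd; have Gu := lcn_memG Lu.
have := phi_Hall_Witt Lu Gc Gd; rewrite phi_commgVV // phi_commgV //.
set P := phi [~ u, c, d]; set Q := phi [~ [~ c, d], u].
have PQ : commute P Q.
  apply: phi_lcn4_commute; last by rewrite !groupR.
  by apply: lcn_memR => //; apply: lcn_memR.
have P3 : P ^+ 3 = 1.
  by rewrite -morphX ?G3 ?morph1 ?(subsetP nL5G) // !groupR.
rewrite -mulgA -PQ mulgA expg3_mulgg //.
by move/(canRL (mulKVg P)); rewrite mulg1.
Qed.

Lemma exponent3_lcn4_commg a b c d : a \in G -> b \in G -> c \in G -> d \in G ->
  [~ a, b, c, d] \in L 5.
Proof.
move=> Ga Gb Gc Gd.
have Lab : [~ a, b] \in L 2 := lcn_memR (Ga : a \in L 1) Gb.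
have Lcd : [~ c, d] \in L 2 := lcn_memR (Gc : c \in L 1) Gd.
set x := [~ a, b, c, d].
have Gx : x \in G by rewrite !groupR.
have x_sym : phi x = phi [~ c, d, a, b].
  rewrite (phi_inv_congr _ _ (lcn4_swap23 Ga Gb Gc Gd)) ?groupR //.
  rewrite -(phi_inv_congr _ _ (lcn4_swap12 Ga Gc Gb Gd)) ?groupR //.
  rewrite (phi_inv_congr _ _ (lcn4_swap34 Gc Ga Gb Gd)) ?groupR //.
  by rewrite (phi_inv_congr _ _ (lcn4_swap23 Gc Ga Gd Gb)) ?groupR ?invgK.
have x_inv : phi [~ c, d, a, b] = (phi x)^-1.
  rewrite -(phi_commg_lcn2 Lab Gc Gd) -(phi_commg_lcn2 Lcd Ga Gb).
  by rewrite -morphV ?(subsetP nL5G) ?groupR // invg_comm.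
have x3 : phi x ^+ 3 = 1 by rewrite -morphX ?(subsetP nL5G) // G3 ?morph1.
apply: coset_idr; first exact: (subsetP nL5G).
by move: x3; rewrite expgS expgS expg1 {2}x_sym x_inv mulVg mulg1.
Qed.

Lemma exponent3_lcn4 : nilpotent G -> L 4 = 1.
Proof.
move=> nilG; apply: nil_lcn_stable nilG _.
apply: (@lcn_sub_commg_seq _ G G (subxx _) (subset_gen _) 0 3) => //.
move=> y [|b [|c [|d [|? ?]]]] // Ly _ /=; rewrite !andbT => /and3P[Gb Gc Gd].
exact: exponent3_lcn4_commg (lcn_memG Ly) Gb Gc Gd.
Qed.

End ExponentThree.

Lemma expgS_pexp (gT : finGroupType) (w : gT) p i : (w ^+ (p ^ i)) ^+ p = w ^+ (p ^ i.+1).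
Proof. by rewrite -expgM expnSr. Qed.

Section SemiAbelianOmega.
Variables (gT : finGroupType) (p : nat) (G : {group gT}).
Local Notation Omega := [set x in G | x ^+ p == 1].

Lemma omega_expg x : x \in Omega -> x ^+ p = 1.
Proof. by rewrite inE => /andP[_ /eqP]. Qed.

Lemma omega_norm : G \subset 'N(Omega).
Proof.
apply: norms_memJ => x g; rewrite !inE => /andP[Gx /eqP x1] Gg.
by rewrite groupJ //= -conjXg x1 conj1g eqxx.
Qed.

Hypothesis semiG : strongly_semi_p_abelian p G.

Lemma semi_p_abelian1 a b :
  a \in G -> b \in G -> (a * b) ^+ p = 1 <-> a ^+ p * b ^+ p = 1.
Proof. by move=> Ga Gb; have := semiG (ltn0Sn 0) Ga Gb; rewrite expn1. Qed.

Lemma omega_group_set : group_set Omega.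
Proof.
apply/group_setP; split; first by rewrite inE group1 expg1n eqxx.
move=> x y; rewrite !inE => /andP[Gx /eqP x1] /andP[Gy /eqP y1].
by rewrite groupM //; apply/eqP/(semi_p_abelian1 Gx Gy); rewrite x1 y1 mulg1.
Qed.

Definition omega := Group omega_group_set.

Lemma omega_mul_expg x h : x \in omega -> h \in G -> (x * h) ^+ p = h ^+ p.
Proof.
rewrite inE => /andP[Gx /eqP x1] Gh.
have : (x * h * h^-1) ^+ p = 1 by rewrite mulgK.
move/(semi_p_abelian1 (groupM Gx Gh) (groupVr Gh)); rewrite expgVn => xh.
by apply/eqP; rewrite eq_mulgV1 xh.
Qed.

Lemma coset_omega_eq1 (w : gT) : w \in G -> coset omega w = 1 <-> w ^+ p = 1.
Proof.
move=> Gw; have Nw : w \in 'N(omega) := subsetP omega_norm w Gw.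
split=> [/(coset_idr Nw)/omega_expg // | w1].
by apply: coset_id; rewrite inE Gw w1 eqxx.
Qed.

Lemma quotient_omega_semi : strongly_semi_p_abelian p (G / omega).
Proof.
move=> i _ _ _ /morphimP[a Na Ga ->] /morphimP[b Nb Gb ->].
rewrite -(morphM _ Na Nb) -(morphX _ _ (groupM Na Nb)) -(morphX _ _ Na) -(morphX _ _ Nb).
rewrite -(morphM _ (groupX _ Na) (groupX _ Nb)) /=.
have Gai := groupX (p ^ i) Ga; have Gbi := groupX (p ^ i) Gb.
have semiGi := semiG (ltn0Sn i) Ga Gb.
rewrite coset_omega_eq1 ?groupX ?groupM // coset_omega_eq1 ?groupM // expgS_pexp.
split=> [/semiGi | pexp1]; first by rewrite -!expgS_pexp => /semi_p_abelian1; apply.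
by apply/semiGi; rewrite -!expgS_pexp; apply/semi_p_abelian1.
Qed.

Lemma exponent_quotient_omega r : exponent G %| p ^ r.+1 -> exponent (G / omega) %| p ^ r.
Proof.
move=> expG; apply/exponentP=> _ /morphimP[x Nx Gx ->].
rewrite -morphX // coset_omega_eq1 ?groupX // expgS_pexp.
exact: exponentP expG x Gx.
Qed.

End SemiAbelianOmega.

Lemma generated_by_at_most_morphim (aT rT : finGroupType) (D G : {group aT})
    (f : {morphism D >-> rT}) d :
  G \subset D -> generated_by_at_most d G -> generated_by_at_most d (f @* G).
Proof.
move=> sGD [X [leXd genX]]; exists (f @* X); split.
  exact: leq_trans (leq_morphim f X) leXd.
by rewrite -morphim_gen ?genX // (subset_trans _ sGD) // -genX subset_gen.
Qed.

Lemma exponent_dvdn_pexp (gT : finGroupType) (G : {group gT}) p r :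
  prime p -> p.-group G -> exponent G <= p ^ r -> exponent G %| p ^ r.
Proof.
move=> p_pr; rewrite -pnat_exponent => /p_natP[k ->] le_kr.
by rewrite dvdn_exp2l // -(@leq_exp2l p) ?prime_gt1.
Qed.

Lemma semi3_abelian_nil_class (gT : finGroupType) (G : {group gT}) r d :
  3.-group G -> strongly_semi_p_abelian 3 G -> exponent G %| 3 ^ r.+1 ->
  generated_by_at_most d G -> nil_class G <= r * (d + 1) + 3.
Proof.
elim: r gT G => [|r IH] gT G pG semiG expG genG; have nilG := pgroup_nil pG.
  apply/(lcn_nil_classP 3 nilG)/(exponent3_lcn4 _ nilG) => x Gx.
  by move/exponentP: expG; rewrite expn1; apply.
set W := omega semiG.
have nWG : G \subset 'N(W) := omega_norm 3 G.
have pQ := quotient_pgroup W pG.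
have := IH _ _ pQ (@quotient_omega_semi _ _ _ semiG) (exponent_quotient_omega semiG expG).
move/(_ (generated_by_at_most_morphim _ nWG genG)).
move/(lcn_nil_classP _ (pgroup_nil pQ)) => trivQ.
have sLW : 'L_(r * (d + 1) + 4)(G) \subset W.
  rewrite -(quotient_sub1 (subset_trans (lcn_sub _ _) nWG)).
  by rewrite /quotient morphim_lcn // addnS trivQ.
have engelG := lcn_engel2_from_cubes (N := W) (ltn_addl _ (isT : 1 < 4))
  (@omega_expg _ 3 G) (@omega_mul_expg _ _ _ semiG) sLW.
case: genG => X [leXd genX].
have sXG : X \subset G by rewrite -genX subset_gen.
have sGX : G \subset <<X>> by rewrite genX.
rewrite addnS in engelG.
apply/(lcn_nil_classP _ nilG).
rewrite (_ : (r.+1 * (d + 1) + 3).+1 = (r * (d + 1) + 3 + d).+2); last by lia.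
by have := lcn_engel2_bound sXG sGX nilG leXd engelG.
Qed.

Unset Implicit Arguments.
Set Strict Implicit.

Theorem theorem1p1 (gT : finGroupType) (G : {group gT}) (r d : nat) :
  3.-group G ->
  strongly_semi_p_abelian 3 G ->
  0 < r ->
  exponent G <= 3 ^ r ->
  generated_by_at_most d G ->
  nil_class G <= (r - 1) * (d + 1) + 3.
Proof.
move=> pG semiG r_gt0 expG genG.
case: r r_gt0 expG => [|r] // _ expG; rewrite subn1 /=.
exact: semi3_abelian_nil_class pG semiG (exponent_dvdn_pexp (isT : prime 3) pG expG) genG.
Qed.
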